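(* Let $G=(\mathcal{X},\mathcal{A},\mu,V)$ be a $k$-player free game with $\mu=\mu_1\otimes\cdots\otimes\mu_k$, and let $\gamma>0$. Suppose that for each $j\in[k]$, $\mathcal{X}'_j$ is a finite alphabet and $f_j:\mathcal{X}'_j\to\mathcal{X}_j$ is a map such that, for $U_j$ uniformly random on $\mathcal{X}'_j$, the distribution of $f_j(U_j)$ is within total variation distance $\gamma/k$ of $\mu_j$. Let $G'=(\mathcal{X}',\mathcal{A},U,V')$ where $\mathcal{X}'=\mathcal{X}'_1\times\cdots\times\mathcal{X}'_k$, $U$ is the uniform distribution on $\mathcal{X}'$, and $V'(x',a)=V\big((f_1(x'_1),\dots,f_k(x'_k)),a\big)$. Then $|\mathrm{val}^*(G')-\mathrm{val}^*(G)|\le\gamma$.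
   Context: A $k$-player game $G=(\mathcal{X},\mathcal{A},\mu,V)$ has finite product alphabets $\mathcal{X}=\prod_j\mathcal{X}_j$, $\mathcal{A}=\prod_j\mathcal{A}_j$, input distribution $\mu$ on $\mathcal{X}$ and predicate $V:\mathcal{X}\times\mathcal{A}\to\{0,1\}$; the referee samples $x\leftarrow\mu$, sends $x_j$ to player $j$, and accepts iff $V(x,a)=1$. It is free if $\mu$ is a product distribution. The entangled value $\mathrm{val}^*(G)$ is the supremum of the acceptance probability over strategies where the players share a finite-dimensional entangled state and each applies a POVM (depending on their own input) to their share to produce their answer. *)

From HB Require Import structures.
From mathcomp Require Import all_boot all_order all_algebra.
From mathcomp Require Import classical_sets reals.
From mathcomp Require Import complex.

Set Implicit Arguments.
Unset Strict Implicit.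
Unset Printing Implicit Defensive.

Import Order.TTheory GRing.Theory Num.Theory.
Local Open Scope ring_scope.

Section Games.
Variable R : realType.
Local Notation C := (R[i]).

Definition psdmx (n : nat) (M : 'M[C]_n) : Prop :=
  M = map_mx Num.conj M^T /\
  forall v : 'cV[C]_n, 0 <= ((map_mx Num.conj v^T) *m M *m v) ord0 ord0.

Definition povm (n : nat) (A : finType) (P : A -> 'M[C]_n) : Prop :=
  (forall a, psdmx (P a)) /\ \sum_(a : A) P a = 1%:M.

Variable k : nat.
Variables (X A : 'I_k -> finType).

Definition inputs := {dffun forall j : 'I_k, X j}.
Definition answers := {dffun forall j : 'I_k, A j}.

(* Joint Hilbert space C^{d_1} (x) ... (x) C^{d_k}: basis indexed by
   tuples of local basis indices. *)
Definition jidx (d : 'I_k -> nat) := {dffun forall j : 'I_k, 'I_(d j)}.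

Definition unit_state (d : 'I_k -> nat) (psi : jidx d -> C) : Prop :=
  \sum_(i : jidx d) `|psi i| ^+ 2 = 1.

(* <psi| M_1 (x) ... (x) M_k |psi> *)
Definition tens_expect (d : 'I_k -> nat) (psi : jidx d -> C)
    (M : forall j : 'I_k, 'M[C]_(d j)) : C :=
  \sum_(i : jidx d) \sum_(i' : jidx d)
     Num.conj (psi i) * (\prod_(j : 'I_k) M j (i j) (i' j)) * psi i'.

Definition win_prob (mu : inputs -> R) (V : inputs -> answers -> bool)
    (d : 'I_k -> nat) (psi : jidx d -> C)
    (P : forall j : 'I_k, X j -> A j -> 'M[C]_(d j)) : R :=
  \sum_(x : inputs) mu x *
    \sum_(a : answers | V x a) @complex.Re R (tens_expect psi (fun j => P j (x j) (a j))).

Definition valstar (mu : inputs -> R) (V : inputs -> answers -> bool) : R :=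
  sup [set r : R | exists (d : 'I_k -> nat) (psi : jidx d -> C)
                          (P : forall j : 'I_k, X j -> A j -> 'M[C]_(d j)),
         [/\ unit_state psi, (forall j x, povm (P j x)) &
             r = win_prob mu V psi P]].

End Games.

Definition is_distr (R : realType) (T : finType) (p : T -> R) : Prop :=
  (forall t, 0 <= p t) /\ \sum_(t : T) p t = 1.

Definition tvdist (R : realType) (T : finType) (p q : T -> R) : R :=
  2^-1 * \sum_(t : T) `|p t - q t|.

Definition push_unif (R : realType) (T' T : finType) (f : T' -> T) : T -> R :=
  fun t => #|[set u : T' | f u == t]|%:R / #|T'|%:R.

Definition prod_distr (R : realType) (k : nat) (X : 'I_k -> finType)
    (mu : forall j : 'I_k, X j -> R) : inputs X -> R :=
  fun x => \prod_(j : 'I_k) mu j (x j).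

Definition unif_distr (R : realType) (k : nat) (X : 'I_k -> finType) :
    inputs X -> R :=
  fun _ => 1 / #|inputs X|%:R.

Definition pull_pred (k : nat) (X X' A : 'I_k -> finType)
    (f : forall j : 'I_k, X' j -> X j) (V : inputs X -> answers A -> bool) :
    inputs X' -> answers A -> bool :=
  fun x' a => V (finfun (fun j => f j (x' j)) : inputs X) a.

(* The game G' has the same entangled value as the game G_f with inputs drawn
   from the product of the pushforwards f_j(U_j): a strategy for G_f becomes one
   for G' by precomposing with the f_j, and a strategy for G' becomes one for G_f
   by letting player j answer x with the POVM of a uniformly random preimage of x;
   both preserve the winning probability.  For a fixed strategy the winning
   probability on each input lies in [0, 1], so changing the input distribution
   from prod_j f_j(U_j) to prod_j mu_j moves it by at most their total variation
   distance, which a hybrid argument bounds by sum_j gamma/k = gamma.  Suprema of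
   two families that are pointwise gamma-close are gamma-close. *)

From HB Require Import structures.
From mathcomp Require Import all_boot all_order all_algebra.
From mathcomp Require Import classical_sets reals.
From mathcomp Require Import complex.
From mathcomp Require Import boolp sesquilinear spectral ring lra.
Import Order.TTheory GRing.Theory Num.Theory.

Set Implicit Arguments.
Unset Strict Implicit.
Unset Printing Implicit Defensive.
Local Open Scope ring_scope.
Local Open Scope complex_scope.

Lemma bigA_distr_dffun (T : comNzRingType) (I : finType) (T_ : I -> finType)
    (F : forall i, T_ i -> T) :
  \prod_(i : I) \sum_(t : T_ i) F i t =
  \sum_(g : {dffun forall i, T_ i}) \prod_(i : I) F i (g i).
Proof.
under eq_bigr => i _ do rewrite (big_tag (fun i t => F i t) i).
rewrite bigA_distr_big_dep.
transitivity (\sum_(t : fprod T_) \prod_(i in I) [ffun t => F i t] (t i)).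
  rewrite (@big_fprod _ _ _ _ _ I T_ (fun i => [ffun t => F i t])).
  apply: eq_bigr => g _; apply: eq_bigr => i _.
  by congr untag; apply/funext => t; rewrite ffunE.
rewrite (reindex (@fprod_of_dffun _ T_)); last exact/onW_bij/fprod_of_dffun_bij.
by apply: eq_bigr => g _; apply: eq_bigr => i _; rewrite ffunE fprodE.
Qed.

Lemma dffun_neq (I : finType) (T_ : I -> finType) (g h : {dffun forall i, T_ i}) :
  g != h -> exists i, g i != h i.
Proof.
move=> gh; apply/existsP; apply: contraR gh => /existsPn gh.
by apply/eqP/ffunP => i; move/negPn/eqP: (gh i).
Qed.

Lemma natr_eq_dffun (T : comNzRingType) (I : finType) (T_ : I -> finType)
    (g h : {dffun forall i, T_ i}) :
  ((g == h)%:R : T) = \prod_i (g i == h i)%:R.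
Proof.
have [->|/dffun_neq[i gh]] := eqVneq g h; first by rewrite big1 // => i _; rewrite eqxx.
by rewrite (bigD1 i) //= (negbTE gh) mul0r.
Qed.

Section PositiveSemidefinite.
Variable R : realType.
Local Open Scope sesquilinear_scope.
Local Notation C := (R[i]).

(* Spectral decomposition M = P^* diag(s) P with s >= 0, and B := diag(sqrt s) P. *)
Lemma psdmx_gram n (M : 'M[C]_n) : psdmx M ->
  exists B : 'M[C]_n, forall i i', M i i' = \sum_l Num.conj (B l i) * B l i'.
Proof.
move=> [Mh Mpos]; have /orthomx_spectralP : M \is normalmx by apply/normalmxP; rewrite -Mh.
set P := spectralmx M; set s := spectral_diag M => ME.
have Pu : P \is unitarymx by apply: spectral_unitarymx.
rewrite invmx_unitary // in ME.
have Mentry i i' : M i i' = \sum_l Num.conj (P l i) * s 0 l * P l i'.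
  rewrite ME !mxE; apply: eq_bigr => l _.
  rewrite !mxE (bigD1 l) //= big1 ?addr0; last first.
    by move=> m /negPf ml; rewrite !mxE ml mulr0n mulr0.
  by rewrite !mxE eqxx mulr1n.
have s_ge0 l : 0 <= s 0 l.
  have := Mpos ((row l P)^t*).
  have -> : map_mx Num.conj ((row l P)^t*)^T = row l P.
    by apply/matrixP => a b; rewrite !mxE conjCK.
  rewrite ME !mulmxA -row_mul; have /unitarymxP -> := Pu.
  have -> : (row l P)^t* = col l (P^t*) by apply/matrixP => a b; rewrite !mxE.
  have Pcol : P *m col l (P^t*) = col l 1%:M.
    apply/matrixP => a b; move/matrixP: (unitarymxP Pu) => /(_ a l).
    by rewrite !mxE => <-; apply: eq_bigr => c _; rewrite !mxE.
  rewrite -!mulmxA Pcol mulmxA -row_mul mul1mx.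
  rewrite !mxE (bigD1 l) //= big1 => [|m ml]; last by rewrite !mxE (negPf ml) mulr0.
  by rewrite !mxE !eqxx !mulr1n mulr1 addr0.
exists (\matrix_(l, i) (sqrtC (s 0 l) * P l i)) => i i'.
rewrite Mentry; apply: eq_bigr => l _; rewrite !mxE rmorphM /=.
have -> : Num.conj (sqrtC (s 0 l)) = sqrtC (s 0 l).
  by apply/CrealP/ger0_real; rewrite sqrtC_ge0.
by rewrite mulrCA !mulrA -expr2 sqrtCK; ring.
Qed.

End PositiveSemidefinite.

Section TensorExpectation.
Variables (R : realType) (k : nat) (d : 'I_k -> nat).
Local Notation C := (R[i]).
Variable psi : jidx d -> C.

Lemma tens_expect_gram (M B : forall j, 'M[C]_(d j)) :
  (forall j i i', M j i i' = \sum_l Num.conj (B j l i) * B j l i') ->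
  tens_expect psi M =
  \sum_(l : jidx d) `|\sum_(i : jidx d) (\prod_j B j (l j) (i j)) * psi i| ^+ 2.
Proof.
move=> MB; rewrite /tens_expect.
under eq_bigr => i _ do under eq_bigr => i' _ do
  rewrite (eq_bigr _ (fun j _ => MB j (i j) (i' j))) bigA_distr_dffun.
transitivity (\sum_(i : jidx d) \sum_(i' : jidx d) \sum_(l : jidx d)
   Num.conj (\prod_j B j (l j) (i j) * psi i) * ((\prod_j B j (l j) (i' j)) * psi i')).
  apply: eq_bigr => i _; apply: eq_bigr => i' _.
  rewrite big_distrr big_distrl /=; apply: eq_bigr => l _.
  by rewrite big_split /= rmorphM rmorph_prod /=; ring.
under eq_bigr => i _ do rewrite exchange_big /=.
rewrite exchange_big /=; apply: eq_bigr => l _.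
rewrite normCKC rmorph_sum big_distrl /=.
by apply: eq_bigr => i _; rewrite big_distrr.
Qed.

Lemma tens_expect_ge0 (M : forall j, 'M[C]_(d j)) :
  (forall j, psdmx (M j)) -> 0 <= tens_expect psi M.
Proof.
move=> Mpsd; have [B MB] : exists B : forall j, 'M[C]_(d j),
    forall j i i', M j i i' = \sum_l Num.conj (B j l i) * B j l i'.
  by exists (fun j => projT1 (cid (psdmx_gram (Mpsd j)))) => j;
    exact: projT2 (cid (psdmx_gram (Mpsd j))).
by rewrite (tens_expect_gram MB); apply: sumr_ge0 => l _; apply: exprn_ge0.
Qed.

Lemma sum_tens_expect_povm (A : 'I_k -> finType) (Q : forall j, A j -> 'M[C]_(d j)) :
  (forall j, \sum_(a : A j) Q j a = 1%:M) ->
  \sum_(a : answers A) tens_expect psi (fun j => Q j (a j)) =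
  \sum_(i : jidx d) `|psi i| ^+ 2.
Proof.
move=> Qsum; rewrite /tens_expect exchange_big /=; apply: eq_bigr => i _.
have sumQ (i' : jidx d) : \sum_(a : answers A) \prod_j Q j (a j) (i j) (i' j) = (i == i')%:R.
  rewrite -(bigA_distr_dffun (fun j a => Q j a (i j) (i' j))) natr_eq_dffun.
  by apply: eq_bigr => j _; rewrite -summxE Qsum mxE.
rewrite exchange_big /=.
under eq_bigr => i' _ do rewrite -big_distrl -big_distrr /= sumQ.
rewrite (bigD1 i) //= big1 => [|i' /negbTE]; last by rewrite eq_sym => ->; rewrite mulr0 mul0r.
by rewrite eqxx mulr1 addr0 normCKC.
Qed.

End TensorExpectation.

Lemma Re_sum (R : realType) (I : Type) (r : seq I) (P : pred I) (F : I -> R[i]) :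
  complex.Re (\sum_(i <- r | P i) F i) = \sum_(i <- r | P i) complex.Re (F i).
Proof. by apply: (big_morph (@complex.Re R)) => // -[a b] [c e]. Qed.

Lemma Re_scale (R : realType) (c : R) (z : R[i]) : complex.Re (c%:C * z) = c * complex.Re z.
Proof. by case: z => a b /=; rewrite !mul0r subr0. Qed.

Section WinningProbability.
Variables (R : realType) (k : nat) (X A : 'I_k -> finType).
Variable V : inputs X -> answers A -> bool.
Variables (d : 'I_k -> nat) (psi : jidx d -> R[i]).
Variable P : forall j : 'I_k, X j -> A j -> 'M[R[i]]_(d j).
Arguments P : clear implicits.

Definition win_prob_at (x : inputs X) : R :=
  \sum_(a : answers A | V x a) complex.Re (tens_expect psi (fun j => P j (x j) (a j))).

Lemma win_probE (mu : inputs X -> R) :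
  win_prob mu V psi P = \sum_x mu x * win_prob_at x.
Proof. by []. Qed.

Hypotheses (psi_unit : unit_state psi) (P_povm : forall j x, povm (P j x)).
Arguments P_povm : clear implicits.

Lemma win_prob_at_bound x : 0 <= win_prob_at x <= 1.
Proof.
have Re_ge0 (a : answers A) :
    0 <= complex.Re (tens_expect psi (fun j => P j (x j) (a j))).
  have := tens_expect_ge0 psi (fun j => (P_povm j (x j)).1 (a j)).
  by rewrite lecE => /andP[].
apply/andP; split; first exact: sumr_ge0.
apply: (@le_trans _ _ (\sum_(a : answers A)
   complex.Re (tens_expect psi (fun j => P j (x j) (a j))))).
  by rewrite [leRHS](bigID (V x)) /= lerDl; apply: sumr_ge0.
rewrite -Re_sum (sum_tens_expect_povm psi (Q := fun j => P j (x j))) ?psi_unit //.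
by move=> j; exact: (P_povm j (x j)).2.
Qed.

Lemma win_prob_le1 (mu : inputs X -> R) : is_distr mu -> win_prob mu V psi P <= 1.
Proof.
move=> [mu_ge0 mu_sum]; rewrite win_probE -mu_sum; apply: ler_sum => x _.
by rewrite ler_piMr //; case/andP: (win_prob_at_bound x).
Qed.

End WinningProbability.

Section TotalVariation.
Variable R : realType.

(* Centre the test function: [sum_t (p t - q t) * (w t - 1/2)] and [|w t - 1/2| <= 1/2]. *)
Lemma ler_dist_expect_tvdist (T : finType) (p q w : T -> R) :
  \sum_t p t = 1 -> \sum_t q t = 1 -> (forall t, 0 <= w t <= 1) ->
  `|\sum_t p t * w t - \sum_t q t * w t| <= tvdist p q.
Proof.
move=> p_sum q_sum w01.
have -> : \sum_t p t * w t - \sum_t q t * w t = \sum_t (p t - q t) * (w t - 2^-1).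
  have centre : \sum_t (p t - q t) * 2^-1 = 0.
    by rewrite -mulr_suml sumrB p_sum q_sum subrr mul0r.
  have expand t : (p t - q t) * (w t - 2^-1) = p t * w t - q t * w t - (p t - q t) * 2^-1.
    by ring.
  by rewrite (eq_bigr _ (fun t _ => expand t)) !sumrB centre subr0.
rewrite /tvdist mulr_sumr; apply: (le_trans (ler_norm_sum _ _ _)).
apply: ler_sum => t _; rewrite normrM mulrC ler_wpM2r //.
by have /andP[w0 w1] := w01 t; rewrite ler_norml; apply/andP; split; lra.
Qed.

Lemma is_distr_prod (k : nat) (X : 'I_k -> finType) (p : forall j, X j -> R) :
  (forall j, is_distr (p j)) -> is_distr (prod_distr p).
Proof.
move=> p_distr; split=> [x|]; first by apply: prodr_ge0 => j _; exact: (p_distr j).1.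
rewrite /prod_distr -(bigA_distr_dffun (fun j t => p j t)).
by apply: big1 => j _; exact: (p_distr j).2.
Qed.

Section Hybrid.
Variables (k : nat) (X : 'I_k -> finType) (p q : forall j, X j -> R).
Arguments p : clear implicits.
Arguments q : clear implicits.
Hypotheses (p_distr : forall j, is_distr (p j)) (q_distr : forall j, is_distr (q j)).
Arguments p_distr : clear implicits.
Arguments q_distr : clear implicits.

Definition hybrid (m : nat) : inputs X -> R :=
  prod_distr (fun j => if (j < m)%N then q j else p j).

Lemma sum_hybrid_step (j0 : 'I_k) :
  \sum_x `|hybrid j0 x - hybrid j0.+1 x| = \sum_t `|p j0 t - q j0 t|.
Proof.
pose h j : X j -> R := if j == j0 then fun t => `|p j t - q j t|
                       else if (j < j0)%N then q j else p j.
have step x : `|hybrid j0 x - hybrid j0.+1 x| = \prod_j h j (x j).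
  have same_rest :
      \prod_(j | j != j0) (if (j < j0.+1)%N then q j else p j) (x j) =
      \prod_(j | j != j0) (if (j < j0)%N then q j else p j) (x j).
    apply: eq_bigr => j /negbTE jj0.
    by rewrite ltnS leq_eqVlt -[nat_of_ord j == _]/(j == j0) jj0.
  rewrite /hybrid /prod_distr (bigD1 j0) //= [X in _ - X](bigD1 j0) //=.
  rewrite [RHS](bigD1 j0) //= /h eqxx ltnn ltnSn same_rest -mulrBl normrM.
  congr (_ * _); rewrite ger0_norm; last first.
    by apply: prodr_ge0 => j _; case: ifP => _; [exact: (q_distr j).1 | exact: (p_distr j).1].
  by apply: eq_bigr => j /negbTE jj0; rewrite jj0.
rewrite (eq_bigr _ (fun x _ => step x)) -(bigA_distr_dffun h) (bigD1 j0) //=.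
rewrite [X in _ * X]big1 ?mulr1; first by rewrite /h eqxx.
move=> j /negbTE jj0; rewrite /h jj0; case: ifP => _; [exact: (q_distr j).2 | exact: (p_distr j).2].
Qed.

Lemma tvdist_prod_le : tvdist (prod_distr p) (prod_distr q) <= \sum_j tvdist (p j) (q j).
Proof.
have hybrid0 : hybrid 0 = prod_distr p by [].
have hybridk : hybrid k = prod_distr q.
  by apply/funext => x; apply: eq_bigr => j _; rewrite ltn_ord.
rewrite /tvdist -mulr_sumr ler_wpM2l ?invr_ge0 ?ler0n //.
rewrite -hybrid0 -hybridk [leRHS](eq_bigr _ (fun j _ => esym (sum_hybrid_step j))).
rewrite exchange_big /=; apply: ler_sum => x _.
rewrite -opprB -(telescope_sumr (fun m => hybrid m x) (leq0n k)) normrN big_mkord.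
by apply: (le_trans (ler_norm_sum _ _ _)); apply: ler_sum => j _; rewrite distrC.
Qed.

End Hybrid.

End TotalVariation.

Lemma sum_natr_eq (R : realType) (T' T : finType) (g : T' -> T) (x : T) :
  \sum_(t : T') ((g t == x)%:R : R) = #|[set u | g u == x]|%:R.
Proof.
rewrite -sum1dep_card natr_sum [RHS]big_mkcond /=.
by apply: eq_bigr => t _; case: (g t == x).
Qed.

Lemma card_inputs (R : realType) (k : nat) (X' : 'I_k -> finType) :
  #|inputs X'|%:R = \prod_j (#|X' j|%:R : R).
Proof.
rewrite -sumr_const.
transitivity (\sum_(y : inputs X') \prod_(j : 'I_k) (1 : R)).
  by apply: eq_bigr => y _; rewrite big1.
rewrite -(bigA_distr_dffun (fun j (t : X' j) => (1 : R))).
by apply: eq_bigr => j _; rewrite sumr_const.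
Qed.

Section Pullback.
Variables (R : realType) (k : nat) (X X' : 'I_k -> finType).
Variable f : forall j, X' j -> X j.
Arguments f : clear implicits.
Hypothesis X'_nonempty : forall j, (0 < #|X' j|)%N.

Definition pull_input (y : inputs X') : inputs X := finfun (fun j => f j (y j)).

Definition push_distr : inputs X -> R := prod_distr (fun j => push_unif R (f j)).

Lemma push_unif_distr j : is_distr (push_unif R (f j)).
Proof.
split=> [x|]; first by rewrite divr_ge0.
rewrite -mulr_suml; under eq_bigr => x _ do rewrite -sum_natr_eq.
have one t : \sum_x ((f j t == x)%:R : R) = 1.
  by rewrite (bigD1 (f j t)) //= eqxx big1 ?addr0 // => x /negbTE; rewrite eq_sym => ->.
rewrite exchange_big /=; under eq_bigr => t _ do rewrite one.
by rewrite sumr_const mulfV // pnatr_eq0 -lt0n.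
Qed.

Lemma unif_pull_input (y : inputs X') (x : inputs X) :
  \prod_j ((f j (y j) == x j)%:R / #|X' j|%:R) =
  ((pull_input y == x)%:R / #|inputs X'|%:R : R).
Proof.
rewrite big_split /= natr_eq_dffun card_inputs prodfV; congr (_ * _).
by apply: eq_bigr => j _; rewrite ffunE.
Qed.

Lemma sum_unif_pull (h : inputs X -> R) :
  \sum_(y : inputs X') unif_distr R y * h (pull_input y) =
  \sum_(x : inputs X) push_distr x * h x.
Proof.
transitivity (\sum_(y : inputs X') \sum_(x : inputs X)
   ((pull_input y == x)%:R / #|inputs X'|%:R) * h x).
  apply: eq_bigr => y _; rewrite (bigD1 (pull_input y)) //= big1 ?addr0.
    by rewrite eqxx.
  by move=> x /negbTE; rewrite eq_sym => ->; rewrite !mul0r.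
rewrite exchange_big /=; apply: eq_bigr => x _; rewrite -mulr_suml; congr (_ * _).
under eq_bigr => y _ do rewrite -unif_pull_input.
rewrite -(bigA_distr_dffun (fun j (t : X' j) => (f j t == x j)%:R / #|X' j|%:R)).
by apply: eq_bigr => j _; rewrite -mulr_suml sum_natr_eq.
Qed.

(* The law of [U_j] given [f_j U_j = x]: uniform on the fibre of [x], or on all of
   [X'_j] when that fibre is empty (a junk choice, as [x] then has weight 0). *)
Definition fiber_weight j (x : X j) (t : X' j) : R :=
  if #|[set u | f j u == x]| == 0%N then #|X' j|%:R^-1
  else (f j t == x)%:R / #|[set u | f j u == x]|%:R.
Arguments fiber_weight : clear implicits.

Lemma fiber_weight_ge0 j x t : 0 <= fiber_weight j x t.
Proof. by rewrite /fiber_weight; case: ifP; rewrite ?invr_ge0 ?divr_ge0. Qed.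

Lemma sum_fiber_weight j x : \sum_t fiber_weight j x t = 1.
Proof.
rewrite /fiber_weight; case: eqP => [_|/eqP n0].
  by rewrite sumr_const -(mulr_natr (#|X' j|%:R^-1)) mulVf // pnatr_eq0 -lt0n.
by rewrite -mulr_suml sum_natr_eq divff // pnatr_eq0.
Qed.

Lemma push_unif_fiber_weight j x t :
  push_unif R (f j) x * fiber_weight j x t = (f j t == x)%:R / #|X' j|%:R.
Proof.
rewrite /push_unif /fiber_weight; case: ifP => [/eqP n0|/negbT n0].
  rewrite n0 mul0r; case fx: (f j t == x); last by rewrite !mul0r.
  by move: n0 => /eqP; rewrite cards_eq0 => /eqP/setP/(_ t); rewrite !inE fx.
by rewrite [LHS]mulrC mulrA divfK // pnatr_eq0.
Qed.

(* Averaging over the fibres undoes the pushforward. *)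
Lemma sum_push_fiber_weight (H : inputs X -> inputs X' -> R) :
  \sum_(x : inputs X) push_distr x *
     \sum_(y : inputs X') (\prod_j fiber_weight j (x j) (y j)) * H x y =
  \sum_(y : inputs X') unif_distr R y * H (pull_input y) y.
Proof.
transitivity (\sum_(x : inputs X) \sum_(y : inputs X')
   ((pull_input y == x)%:R / #|inputs X'|%:R) * H x y).
  apply: eq_bigr => x _; rewrite big_distrr /=; apply: eq_bigr => y _.
  rewrite mulrA -big_split /= -unif_pull_input; congr (_ * _).
  by apply: eq_bigr => j _; rewrite push_unif_fiber_weight.
rewrite exchange_big /=; apply: eq_bigr => y _.
rewrite (bigD1 (pull_input y)) //= big1 ?addr0; first by rewrite eqxx.
by move=> x /negbTE; rewrite eq_sym => ->; rewrite !mul0r.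
Qed.

End Pullback.

Section Strategies.
Variables (R : realType) (k : nat) (X X' A : 'I_k -> finType).
Local Notation C := (R[i]).
Variable f : forall j, X' j -> X j.
Arguments f : clear implicits.
Variable V : inputs X -> answers A -> bool.
Variables (d : 'I_k -> nat) (psi : jidx d -> C).

Lemma win_prob_pull (P : forall j, X j -> A j -> 'M[C]_(d j)) :
  win_prob (@unif_distr R k X') (pull_pred f V) psi (fun j t => P j (f j t)) =
  win_prob (push_distr R f) V psi P.
Proof.
rewrite /win_prob -(sum_unif_pull f (win_prob_at V psi P)).
apply: eq_bigr => y _; congr (_ * _); apply: eq_bigr => a _.
by congr (complex.Re (tens_expect psi _)); apply: functional_extensionality_dep => j; rewrite ffunE.
Qed.

(* On input [x], player [j] samples [t] from the fibre of [x] and plays [P' j t]. *)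
Definition fiber_avg (P' : forall j, X' j -> A j -> 'M[C]_(d j)) j (x : X j) (a : A j) :
  'M[C]_(d j) := \sum_(t : X' j) (fiber_weight R f x t)%:C *: P' j t a.

Lemma povm_fiber_avg (P' : forall j, X' j -> A j -> 'M[C]_(d j)) :
  (forall j, (0 < #|X' j|)%N) -> (forall j t, povm (P' j t)) ->
  forall j (x : X j), povm (fiber_avg P' x).
Proof.
move=> X'_nonempty P'_povm j x; split=> [a|]; first split.
- apply/matrixP => u v; rewrite !mxE !summxE rmorph_sum /=.
  apply: eq_bigr => t _; rewrite !mxE rmorphM /=.
  rewrite -[Num.conj _%:C]/((fiber_weight R f x t)%:C^*)%C conjc_real.
  by have /matrixP /(_ u v) := ((P'_povm j t).1 a).1; rewrite !mxE => <-.
- move=> v; rewrite mulmx_sumr mulmx_suml summxE.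
  apply: sumr_ge0 => t _; rewrite -scalemxAr -scalemxAl mxE.
  by rewrite mulr_ge0 ?lecR ?fiber_weight_ge0 //; exact: ((P'_povm j t).1 a).2.
rewrite /fiber_avg exchange_big /=.
under eq_bigr => t _ do rewrite -scaler_sumr (P'_povm j t).2.
by rewrite -scaler_suml -rmorph_sum /= sum_fiber_weight // scale1r.
Qed.

Lemma tens_expect_fiber_avg (P' : forall j, X' j -> A j -> 'M[C]_(d j))
    (x : inputs X) (a : answers A) :
  tens_expect psi (fun j => fiber_avg P' (x j) (a j)) =
  \sum_(y : inputs X') (\prod_j fiber_weight R f (x j) (y j))%:C *
      tens_expect psi (fun j => P' j (y j) (a j)).
Proof.
rewrite /tens_expect.
transitivity (\sum_(i : jidx d) \sum_(i' : jidx d) \sum_(y : inputs X')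
  Num.conj (psi i) * ((\prod_j fiber_weight R f (x j) (y j))%:C *
     \prod_j P' j (y j) (a j) (i j) (i' j)) * psi i').
  apply: eq_bigr => i _; apply: eq_bigr => i' _.
  have entry j : fiber_avg P' (x j) (a j) (i j) (i' j) =
      \sum_(t : X' j) (fiber_weight R f (x j) t)%:C * P' j t (a j) (i j) (i' j).
    by rewrite /fiber_avg summxE; apply: eq_bigr => t _; rewrite mxE.
  rewrite (eq_bigr _ (fun j _ => entry j)) bigA_distr_dffun.
  rewrite big_distrr big_distrl /=; apply: eq_bigr => y _.
  by rewrite big_split /= rmorph_prod.
under eq_bigr => i _ do rewrite exchange_big /=.
rewrite exchange_big /=; apply: eq_bigr => y _.
rewrite big_distrr /=; apply: eq_bigr => i _.
by rewrite big_distrr /=; apply: eq_bigr => i' _; ring.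
Qed.

Lemma win_prob_fiber_avg (P' : forall j, X' j -> A j -> 'M[C]_(d j)) :
  win_prob (push_distr R f) V psi (fiber_avg P') =
  win_prob (@unif_distr R k X') (pull_pred f V) psi P'.
Proof.
pose H (x : inputs X) (y : inputs X') := \sum_(a : answers A | V x a)
   complex.Re (tens_expect psi (fun j => P' j (y j) (a j))).
rewrite /win_prob -(sum_push_fiber_weight f H); apply: eq_bigr => x _; congr (_ * _).
under eq_bigr => a _ do rewrite tens_expect_fiber_avg Re_sum.
rewrite exchange_big /=; apply: eq_bigr => y _.
by rewrite /H mulr_sumr; apply: eq_bigr => a _; rewrite Re_scale.
Qed.

End Strategies.

Section SupremumDistance.
Variable R : realType.
Local Open Scope classical_set_scope.

Lemma sup_le_sup_add (S T : set R) e :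
  S !=set0 -> has_ubound T -> (forall r, S r -> exists2 t, T t & r <= t + e) ->
  sup S <= sup T + e.
Proof.
move=> S_neq0 T_ub ST; apply: ge_sup => // r /ST [t Tt rt].
by rewrite (le_trans rt) // lerD2r; exact: ub_le_sup.
Qed.

Lemma ler_dist_sup (S T : set R) e : 0 <= e -> has_ubound S -> has_ubound T ->
    (forall r, S r -> exists2 t, T t & `|r - t| <= e) ->
    (forall t, T t -> exists2 r, S r & `|r - t| <= e) ->
  `|sup S - sup T| <= e.
Proof.
move=> e_ge0 S_ub T_ub ST TS.
have [S0|/set0P S_neq0] := eqVneq S set0.
  have -> : T = set0 by apply/seteqP; split=> // t /TS[r]; rewrite S0.
  by rewrite S0 subrr normr0.
have T_neq0 : T !=set0 by case: S_neq0 => r /ST[t Tt _]; exists t.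
have STe : sup S <= sup T + e.
  apply: sup_le_sup_add => // r /ST[t Tt rt]; exists t => //.
  by move: (ler_norm (r - t)) rt; lra.
have TSe : sup T <= sup S + e.
  apply: sup_le_sup_add => // t /TS[r Sr rt]; exists r => //.
  by move: (ler_norm (t - r)) rt; rewrite distrC; lra.
by rewrite ler_norml; apply/andP; split; lra.
Qed.

End SupremumDistance.

Theorem claim5p1 (R : realType) (k : nat) (X A X' : 'I_k -> finType)
    (mu : forall j : 'I_k, X j -> R) (V : inputs X -> answers A -> bool)
    (gamma : R) (f : forall j : 'I_k, X' j -> X j) :
  (forall j, is_distr (mu j)) ->
  0 < gamma ->
  (forall j, (0 < #|X' j|)%N) ->
  (forall j, tvdist (@push_unif R (X' j) (X j) (f j)) (mu j) <= gamma / k%:R) ->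
  `| valstar (@unif_distr R k X') (pull_pred f V)
     - valstar (prod_distr mu) V | <= gamma.
Proof.
move=> mu_distr gamma_gt0 X'_nonempty tv_small.
have push_distr_j := push_unif_distr R f X'_nonempty.
have tv_prod : tvdist (push_distr R f) (prod_distr mu) <= gamma.
  apply: le_trans (tvdist_prod_le push_distr_j mu_distr) _.
  apply: le_trans (ler_sum _ (fun j _ => tv_small j)) _.
  rewrite sumr_const card_ord; have [->|k_neq0] := eqVneq k 0%N; first exact: ltW.
  by rewrite -(mulr_natr (gamma / k%:R)) divfK ?pnatr_eq0.
have close d psi (P : forall j, X j -> A j -> 'M[R[i]]_(d j)) :
    unit_state psi -> (forall j x, povm (P j x)) ->
  `|win_prob (push_distr R f) V psi P - win_prob (prod_distr mu) V psi P| <= gamma.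
  move=> psi_unit P_povm; rewrite !win_probE; apply: le_trans tv_prod.
  apply: ler_dist_expect_tvdist => [||x]; last exact: win_prob_at_bound.
    exact: (is_distr_prod push_distr_j).2.
  exact: (is_distr_prod mu_distr).2.
apply: ler_dist_sup; first exact: ltW.
- exists 1 => _ [d [psi [P' [psi_unit P'_povm ->]]]].
  rewrite -win_prob_fiber_avg; apply: win_prob_le1 (is_distr_prod push_distr_j) => //.
  exact: povm_fiber_avg.
- exists 1 => _ [d [psi [P [psi_unit P_povm ->]]]].
  exact: win_prob_le1 (is_distr_prod mu_distr).
- move=> _ [d [psi [P' [psi_unit P'_povm ->]]]].
  have Pavg_povm := povm_fiber_avg f X'_nonempty P'_povm.
  exists (win_prob (prod_distr mu) V psi (fiber_avg f P')); first by exists d, psi, (fiber_avg f P').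
  by rewrite -win_prob_fiber_avg; apply: close.
- move=> _ [d [psi [P [psi_unit P_povm ->]]]].
  exists (win_prob (@unif_distr R k X') (pull_pred f V) psi (fun j t => P j (f j t))).
    by exists d, psi, (fun j t => P j (f j t)).
  by rewrite win_prob_pull; apply: close.
Qed.
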